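(* Suppose every $f_i$ is monotone and submodular. Consider a round of the while-loop of the Randomized meta-Greedy algorithm at which the current sets satisfy $|S^t_{\rm tr}|<l$ and $|S^t_i|<k-l$, and let $S^{t+1}_{\rm tr},S^{t+1}_i$ be the sets after the round. Then $$\mathbb{E}\Bigl[\sum_{i=1}^m f_i(S^{t+1}_{\rm tr}\cup S^{t+1}_i)-f_i(S^{t}_{\rm tr}\cup S^{t}_i)\,\Big|\,S^t_{\rm tr},S^t_1,\dots,S^t_m\Bigr]\;\ge\;\frac1k\Bigl(\mathrm{OPT}-\sum_{i=1}^m f_i(S^t_{\rm tr}\cup S^t_i)\Bigr).$$
   Context: $V$ is a finite ground set; $1\le l<k\le |V|$. For $i=1,\dots,m$, $f_i:2^V\to\mathbb{R}_{\ge 0}$; monotone means $A\subseteq B\Rightarrow f_i(A)\le f_i(B)$, submodular means $f_i(A)+f_i(B)\ge f_i(A\cup B)+f_i(A\cap B)$. $\mathrm{OPT}=\max_{|S_{\rm tr}|\le l}\sum_{i=1}^m\max_{|S_i|\le k-l}f_i(S_{\rm tr}\cup S_i)$ (all sets subsets of $V$). One round of the while-loop of Randomized meta-Greedy: compute $e_i^*\in\arg\max_{e\in V}[f_i(S_{\rm tr}\cup S_i\cup\{e\})-f_i(S_{\rm tr}\cup S_i)]$ for each $i$ and $e_{\rm tr}^*\in\arg\max_{e\in V}\sum_{i=1}^m[f_i(S_{\rm tr}\cup S_i\cup\{e\})-f_i(S_{\rm tr}\cup S_i)]$; then with probability $l/k$ add $e^*_{\rm tr}$ to $S_{\rm tr}$,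 and otherwise (probability $(k-l)/k$) add $e_i^*$ to $S_i$ for every $i$. *)

From HB Require Import structures.
From mathcomp Require Import all_boot all_order all_algebra.
Set Implicit Arguments. Unset Strict Implicit. Unset Printing Implicit Defensive.
Import Order.TTheory GRing.Theory Num.Theory.
Local Open Scope ring_scope.

Section Defs.
Variables (R : realFieldType) (V : finType).

Definition set_monotone (f : {set V} -> R) : Prop :=
  forall A B : {set V}, A \subset B -> f A <= f B.

Definition set_submodular (f : {set V} -> R) : Prop :=
  forall A B : {set V}, f (A :|: B) + f (A :&: B) <= f A + f B.

Definition mgain (f : {set V} -> R) (S : {set V}) (e : V) : R :=
  f (S :|: [set e]) - f S.

(* Maxima over nonempty finite families (set0 is always admissible); encoded
   with Num.max and neutral element 0, which is harmless since f_i >= 0. *)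
Definition OPT (m : nat) (f : 'I_m -> {set V} -> R) (k l : nat) : R :=
  \big[Num.max/0]_(Str : {set V} | (#|Str| <= l)%N)
     \sum_(i < m) \big[Num.max/0]_(Si : {set V} | (#|Si| <= k - l)%N)
                    f i (Str :|: Si).

Definition objval (m : nat) (f : 'I_m -> {set V} -> R)
  (Str : {set V}) (S : 'I_m -> {set V}) : R :=
  \sum_(i < m) f i (Str :|: S i).

(* Expected increase of the objective in one round of Randomized meta-Greedy,
   conditional on the current sets (Str, S): with probability l/k the
   training set becomes Str ∪ {etr} (the S_i unchanged); with probability
   (k-l)/k each S_i becomes S_i ∪ {e_i} (Str unchanged). *)
Definition round_expected_gain (m : nat) (f : 'I_m -> {set V} -> R) (k l : nat)
  (Str : {set V}) (S : 'I_m -> {set V}) (etr : V) (e : 'I_m -> V) : R :=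
  (l%:R / k%:R) *
     (objval f (Str :|: [set etr]) S - objval f Str S)
  + ((k - l)%N%:R / k%:R) *
     (objval f Str (fun i => S i :|: [set e i]) - objval f Str S).

End Defs.

From HB Require Import structures.
From mathcomp Require Import all_boot all_order all_algebra.
From mathcomp Require Import lra.
Set Implicit Arguments. Unset Strict Implicit. Unset Printing Implicit Defensive.
Import Order.TTheory GRing.Theory Num.Theory.
Local Open Scope ring_scope.

(* Write g_i(x) for the marginal gain of x for f_i at the current set
   Str ∪ S_i, A = Σ_i g_i(etr) and B = Σ_i g_i(e_i).  The expected gain of the
   round is exactly (l/k)·A + ((k-l)/k)·B, so it suffices to show
       OPT ≤ Σ_i f_i(Str ∪ S_i) + l·A + (k-l)·B.
   For any candidate Ts (|Ts| ≤ l) and Si (|Si| ≤ k-l), submodularity and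
   monotonicity bound f_i(Ts ∪ Si) by f_i(Str ∪ S_i) plus the sum of the
   marginal gains of the elements of Ts and of Si (lemma
   [submodular_union_bound]).  Summed over i, the Ts part is at most |Ts|·A
   because etr maximises the summed gain, and the Si part is at most
   |Si|·g_i(e_i) because e_i maximises g_i. *)

Section SubmodularFacts.
Variables (R : realFieldType) (V : finType) (f : {set V} -> R).
Hypotheses (f_mono : set_monotone f) (f_sub : set_submodular f).

Lemma mgain_ge0 (T : {set V}) (x : V) : 0 <= mgain f T x.
Proof. by rewrite /mgain subr_ge0; apply: f_mono; apply: subsetUl. Qed.

Lemma mgain_antitone (T X : {set V}) (x : V) :
  mgain f (T :|: X) x <= mgain f T x.
Proof.
rewrite /mgain.
have sub_ineq := f_sub (T :|: X) (T :|: [set x]).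
have union_eq : (T :|: X) :|: (T :|: [set x]) = (T :|: X) :|: [set x].
  by rewrite setUACA setUid setUA.
rewrite union_eq in sub_ineq.
have cap_ge : f T <= f ((T :|: X) :&: (T :|: [set x])).
  by apply: f_mono; rewrite subsetI !subsetUl.
lra.
Qed.

Lemma submodular_seq_bound (T : {set V}) (s : seq V) :
  f (T :|: [set:: s]) <= f T + \sum_(x <- s) mgain f T x.
Proof.
elim: s => [|a s IH].
  have -> : [set:: [::]] = set0 :> {set V} by apply/setP => x; rewrite !inE.
  by rewrite big_nil addr0 setU0.
rewrite big_cons set_cons.
have -> : T :|: (a |: [set:: s]) = (T :|: [set:: s]) :|: [set a].
  by rewrite setUCA setUC.
have := mgain_antitone T [set:: s] a; rewrite /mgain => gain_le.
lra.
Qed.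

Lemma submodular_union_bound (T A B : {set V}) :
  f (A :|: B) <= f T + \sum_(x in A) mgain f T x + \sum_(x in B) mgain f T x.
Proof.
have covered : f (A :|: B) <= f (T :|: [set:: enum A ++ enum B]).
  apply: f_mono; apply/subsetP => x xAB.
  by rewrite !inE mem_cat !mem_enum -in_setU xAB orbT.
apply: (le_trans covered); rewrite -addrA -!big_enum -big_cat.
exact: submodular_seq_bound.
Qed.

End SubmodularFacts.

Lemma sum_le_card_mul (R : realFieldType) (I : finType) (A : {set I})
    (F : I -> R) (c : R) (n : nat) :
  0 <= c -> (forall x, F x <= c) -> (#|A| <= n)%N ->
  \sum_(x in A) F x <= n%:R * c.
Proof.
move=> c_ge0 F_le card_le.
apply: (le_trans (ler_sum _ (fun x _ => F_le x))).
by rewrite sumr_const -[c *+ _]mulr_natl ler_wpM2r ?ler_nat.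
Qed.

Lemma bigmax0_le (R : realFieldType) (I : finType) (P : pred I)
    (F : I -> R) (c : R) :
  0 <= c -> (forall i, P i -> F i <= c) -> \big[Num.max/0]_(i | P i) F i <= c.
Proof.
move=> c_ge0 F_le; apply: (big_ind (fun x => x <= c)) => //.
by move=> x y x_le y_le; rewrite ge_max x_le y_le.
Qed.

Section OneRound.
Variables (R : realFieldType) (V : finType) (m k l : nat).
Variable f : 'I_m -> {set V} -> R.
Variables (Str : {set V}) (S : 'I_m -> {set V}).

Let gain (i : 'I_m) (x : V) : R := mgain (f i) (Str :|: S i) x.

Lemma objval_add_shared (etr : V) :
  objval f (Str :|: [set etr]) S - objval f Str S = \sum_(i < m) gain i etr.
Proof.
by rewrite /objval -sumrB; apply: eq_bigr => i _; rewrite /gain /mgain setUAC.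
Qed.

Lemma objval_add_individual (e : 'I_m -> V) :
  objval f Str (fun i => S i :|: [set e i]) - objval f Str S
  = \sum_(i < m) gain i (e i).
Proof.
by rewrite /objval -sumrB; apply: eq_bigr => i _; rewrite /gain /mgain setUA.
Qed.

Hypotheses (f_nonneg : forall i A, 0 <= f i A)
           (f_mono : forall i, set_monotone (f i))
           (f_sub : forall i, set_submodular (f i)).
Variables (e : 'I_m -> V) (etr : V).
Hypotheses (he : forall i x, gain i x <= gain i (e i))
           (hetr : forall x, \sum_(i < m) gain i x <= \sum_(i < m) gain i etr).

Lemma OPT_le_greedy_gains :
  OPT f k l <= objval f Str S + l%:R * \sum_(i < m) gain i etr
               + (k - l)%N%:R * \sum_(i < m) gain i (e i).
Proof.
have gain_ge0 i x : 0 <= gain i x by exact: mgain_ge0.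
have etr_ge0 : 0 <= \sum_(i < m) gain i etr by apply: sumr_ge0.
have e_ge0 : 0 <= \sum_(i < m) gain i (e i) by apply: sumr_ge0.
apply: bigmax0_le => [|Ts card_Ts].
  by rewrite !addr_ge0 ?mulr_ge0 ?sumr_ge0.
have per_fun i : \big[Num.max/0]_(Si : {set V} | (#|Si| <= k - l)%N)
                   f i (Ts :|: Si)
    <= f i (Str :|: S i) + \sum_(x in Ts) gain i x + (k - l)%N%:R * gain i (e i).
  apply: bigmax0_le => [|Si card_Si].
    by rewrite !addr_ge0 ?sumr_ge0 ?mulr_ge0 ?f_nonneg.
  apply: (le_trans (submodular_union_bound (f_mono i) (f_sub i) (Str :|: S i) Ts Si)).
  by rewrite lerD // (sum_le_card_mul _ (he i) card_Si).
apply: (le_trans (ler_sum _ (fun i _ => per_fun i))).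
rewrite big_split big_split /= -mulr_sumr lerD2r lerD2l exchange_big /=.
exact: sum_le_card_mul.
Qed.

End OneRound.

Theorem mainTheorem9 (R : realFieldType) (V : finType) (m k l : nat)
  (f : 'I_m -> {set V} -> R)
  (hl : (1 <= l)%N) (hlk : (l < k)%N) (hkV : (k <= #|V|)%N)
  (f_nonneg : forall i A, 0 <= f i A)
  (f_mono : forall i, set_monotone (f i))
  (f_sub : forall i, set_submodular (f i))
  (Str : {set V}) (S : 'I_m -> {set V})
  (hStr : (#|Str| < l)%N) (hS : forall i, (#|S i| < k - l)%N)
  (e : 'I_m -> V) (etr : V)
  (he : forall i (x : V), mgain (f i) (Str :|: S i) x <= mgain (f i) (Str :|: S i) (e i))
  (hetr : forall x : V, \sum_(i < m) mgain (f i) (Str :|: S i) x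
                        <= \sum_(i < m) mgain (f i) (Str :|: S i) etr) :
  round_expected_gain f k l Str S etr e
    >= (k%:R)^-1 * (OPT f k l - objval f Str S).
Proof.
set A := \sum_(i < m) mgain (f i) (Str :|: S i) etr.
set B := \sum_(i < m) mgain (f i) (Str :|: S i) (e i).
have opt_le := OPT_le_greedy_gains k l f_nonneg f_mono f_sub he hetr.
rewrite -/A -/B in opt_le.
have k_gt0 : 0 < k%:R :> R by rewrite ltr0n (leq_ltn_trans _ hlk).
have -> : round_expected_gain f k l Str S etr e
          = k%:R^-1 * (l%:R * A + (k - l)%N%:R * B).
  rewrite /round_expected_gain objval_add_shared objval_add_individual -/A -/B.
  by rewrite mulrDr !mulrA ![_^-1 * _]mulrC.
apply: ler_wpM2l; first by rewrite invr_ge0 ltW.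
lra.
Qed.
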